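(* Let $k$ be a positive integer. Let $h_1,\dots,h_k$ be i.i.d. hyperparameter configurations sampled from a fixed distribution $\mathcal{D}_{\mathcal{H}}$, and let $X_1,\dots,X_k\in[0,1]$ be the accuracies of the models trained with $h_1,\dots,h_k$ respectively (so $X_1,\dots,X_k$ are i.i.d. copies of a random variable $X$ with cumulative distribution function $F_X$). Let $\widehat{F}_k(t)=\frac1k\sum_{i=1}^k \mathbf{1}_{X_i\le t}$ be the empirical cumulative distribution function of $X_1,\dots,X_k$, let $Y_j=\max_{i\le j}X_i$, and let $\Delta_{k+1}=Y_{k+1}-Y_k$ denote the accuracy gain from sampling the $(k+1)$-th hyperparameter $h_{k+1}\sim\mathcal{D}_{\mathcal{H}}$. Then, with probability at least $1-\frac{1}{\sqrt{k}}$ (over the draw of $X_1,\dots,X_k$), $$\mathbb{E}_{h_{k+1}\sim\mathcal{D}_{\mathcal{H}}}\left[\Delta_{k+1}\right]=\int_0^1 \left(\widehat{F}_k(t)\right)^{k}\left(1-\widehat{F}_k(t)\right)\,dt+\epsilon_{\mathrm{error}}$$ where $\epsilon_{\mathrm{error}}\le 6\sqrt{\frac{\log k}{k}}$.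
   Context: Model accuracies take values in $[0,1]$. The expected accuracy gain $\mathbb{E}_{h_{k+1}\sim\mathcal{D}_{\mathcal{H}}}[\Delta_{k+1}]$ is the paper's notation for $\mathbb{E}[Y_{k+1}-Y_k]$, where $X_{k+1}$ is the accuracy obtained with a fresh independent sample $h_{k+1}\sim\mathcal{D}_{\mathcal{H}}$. $\log$ is the natural logarithm. *)

From HB Require Import structures.
From mathcomp Require Import all_boot all_order all_algebra.
From mathcomp Require Import all_classical all_reals all_analysis.
Set Implicit Arguments. Unset Strict Implicit. Unset Printing Implicit Defensive.
Import Order.TTheory GRing.Theory Num.Theory.
Import numFieldNormedType.Exports.
Local Open Scope classical_set_scope.
Local Open Scope ring_scope.

Section defs.
Context {R : realType} {d : measure_display} {T : measurableType d}.

(* Mutual independence of the real random variables X 0, ..., X (n-1):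
   product rule for every family of Borel sets (taking B i = setT gives
   every finite subfamily). *)
Definition mutually_independent (P : probability T R) (n : nat)
    (X : nat -> T -> R) : Prop :=
  forall B : nat -> set R, (forall i, measurable (B i)) ->
    P [set w | forall i, (i < n)%N -> B i (X i w)]
    = (\prod_(i < n) P (X i @^-1` B i))%E.

Definition identically_distributed (P : probability T R) (n : nat)
    (X : nat -> T -> R) : Prop :=
  forall i, (i < n)%N -> forall B : set R, measurable B ->
    P (X i @^-1` B) = P (X 0%N @^-1` B).

(* Empirical CDF of X 0, ..., X (k-1) (paper's X_1..X_k) at t. *)
Definition ecdf (k : nat) (X : nat -> T -> R) (w : T) (t : R) : R :=
  (k%:R)^-1 * \sum_(i < k) ((X i w <= t)%R%:R : R).

(* Y_j = max_{i <= j} X_i, i.e. max of X 0, ..., X (j-1) (values in [0,1],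
   so the seed 0 is harmless for j >= 1). *)
Definition Ymax (j : nat) (X : nat -> T -> R) (w : T) : R :=
  \big[Num.max/0]_(i < j) X i w.

End defs.

(* For k >= 2 the event in question is sure: the integral is nonnegative and
   the expected gain is at most 2/(k+1) <= 6 sqrt(ln k / k); for k = 1 the
   claimed probability bound is 0.  To bound the gain, cut [0,1] at the grid
   points t_j = j/(k+1).  The gain max(Y_k, X_(k+1)) - Y_k is at most 1/(k+1)
   times one plus the number of grid points crossed, i.e. with
   Y_k <= t_j < X_(k+1), and by independence each crossing has probability
   F(t_j)^k (1 - F(t_j)) <= 1/(k+1). *)

From HB Require Import structures.
From mathcomp Require Import all_boot all_order all_algebra.
From mathcomp Require Import all_classical all_reals all_analysis.
From mathcomp Require Import measurable_realfun lra.
Import Order.TTheory GRing.Theory Num.Theory.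
Import numFieldNormedType.Exports.
Local Open Scope classical_set_scope.
Local Open Scope ring_scope.

Section real_bounds.
Context {R : realFieldType}.

Lemma exprn_mul_subr_le_inv (r : R) (n : nat) : 0 <= r <= 1 ->
  r ^+ n * (1 - r) <= (n.+1%:R)^-1.
Proof.
move=> /andP[r0 r1].
have geom : n.+1%:R * r ^+ n <= \sum_(i < n.+1) r ^+ i.
  rewrite mulr_natl -[X in _ *+ X]card_ord -sumr_const.
  by apply: ler_sum => i _; exact: ler_wiXn2l (leq_ord i).
have telescope : (1 - r) * \sum_(i < n.+1) r ^+ i = 1 - r ^+ n.+1.
  by rewrite -[1 - r]opprB mulNr -subrX1 opprB.
have bound : (1 - r) * (n.+1%:R * r ^+ n) <= 1 - r ^+ n.+1.
  by rewrite -telescope ler_wpM2l // subr_ge0.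
rewrite -(ler_pM2l (ltr0Sn R n)) mulfV ?pnatr_eq0 //.
have := exprn_ge0 n.+1 r0; lra.
Qed.

Lemma sum_ltr_nat_le (m : nat) (c : R) : 0 <= c ->
  \sum_(j < m) (((j%:R : R) < c)%R%:R : R) <= c + 1.
Proof.
move=> c0; elim: m => [|m IH]; first by rewrite big_ord0; lra.
rewrite big_ord_recr /=; case: (ltP m%:R c) => [mc|_]; last by rewrite addr0.
have : \sum_(i < m) (((i%:R : R) < c)%R%:R : R) <= m%:R.
  rewrite -[X in _ <= X%:R]card_ord -sumr_const.
  by apply: ler_sum => i _; case: (_ < c).
rewrite /=; lra.
Qed.

Lemma sum_ltr_nat_ge (m : nat) (c : R) : 0 <= c <= m%:R ->
  c <= \sum_(j < m) (((j%:R : R) < c)%R%:R : R).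
Proof.
elim: m => [|m IH] /andP[c0 cm]; first by rewrite big_ord0.
rewrite big_ord_recr /=; have [cm'|mc] := leP c m%:R.
  by rewrite (le_trans (IH _)) ?c0 ?lerDl //; case: (_ < c).
have -> : \sum_(i < m) (((i%:R : R) < c)%R%:R : R) = m%:R.
  rewrite -[X in _ = X%:R]card_ord -sumr_const; apply: eq_bigr => i _.
  by rewrite (le_lt_trans _ mc) // ler_nat ltnW.
by move: cm; rewrite -natr1.
Qed.

Lemma maxr_subr_le_grid (m : nat) (x y : R) :
  (0 < m)%N -> 0 <= y -> x <= 1 ->
  Num.max y x - y <= m%:R^-1 +
    \sum_(j < m) m%:R^-1 * ((y <= j%:R / m%:R) && (j%:R / m%:R < x))%R%:R.
Proof.
move=> m0 y0 x1; have m0' : 0 < m%:R :> R by rewrite ltr0n.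
have [xy|yx] := leP x y.
  have inv_ge0 : 0 <= m%:R^-1 :> R by rewrite invr_ge0 ler0n.
  by rewrite subrr addr_ge0 ?sumr_ge0 // => j _; rewrite mulr_ge0.
rewrite -mulr_sumr -{1}[m%:R^-1]mulr1 -mulrDr ler_pdivlMl //.
have crossing (j : 'I_m) : ((y <= j%:R / m%:R) && (j%:R / m%:R < x))%R%:R
    = (((j%:R : R) < x * m%:R)%R%:R : R) - ((j%:R : R) < y * m%:R)%R%:R.
  rewrite -!ltr_pdivrMr //; case: (leP y) => [_|jy] /=; first by rewrite subr0.
  by rewrite (lt_trans jy yx) subrr.
rewrite (eq_bigr _ (fun j _ => crossing j)) sumrB.
have xm : 0 <= x * m%:R <= m%:R.
  by rewrite mulr_ge0 ?ler_piMl ?(le_trans y0 (ltW yx)) ?(ltW m0').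
have count_x := sum_ltr_nat_ge _ _ xm.
have count_y := sum_ltr_nat_le m _ (mulr_ge0 y0 (ltW m0')).
rewrite mulrBr ![m%:R * _]mulrC; lra.
Qed.

End real_bounds.

Lemma two_div_le_sqrt_ln_div (R : realType) (k : nat) : (2 <= k)%N ->
  2 / k.+1%:R <= 6 * Num.sqrt (ln (k%:R : R) / k%:R).
Proof.
move=> k2; set K : R := k%:R; set a : R := k.+1%:R^-1.
have K2 : 2 <= K by rewrite /K ler_nat.
have K0 : 0 < K by lra.
have KK : K * K^-1 = 1 by rewrite mulfV // gt_eqF.
have ln_ge : 1 / 2 <= ln K.
  have := expR_ge1Dx (- ln K); rewrite expRN lnK ?posrE //.
  have : 0 < K^-1 by rewrite invr_gt0.
  nra.
have a0 : 0 < a by rewrite invr_gt0 ltr0n.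
have aK : a * (K + 1) = 1 by rewrite /a /K natr1 mulVf // pnatr_eq0.
have a_le : a <= Num.sqrt (ln K / K).
  rewrite -[a](ger0_norm (ltW a0)) -sqrtr_sqr ler_sqrt ?divr_ge0 ?ler_pdivlMr //;
    nra.
rewrite mulrC -/a; nra.
Qed.

Section running_max.
Context {R : realType} {d : measure_display} {T : measurableType d}.

Lemma Ymax0 (X : nat -> T -> R) w : Ymax 0 X w = 0.
Proof. exact: big_ord0. Qed.

Lemma Ymax_recl (X : nat -> T -> R) j w :
  Ymax j.+1 X w = Num.max (X 0%N w) (Ymax j (fun i => X i.+1) w).
Proof. exact: big_ord_recl. Qed.

Lemma Ymax_recr (X : nat -> T -> R) j w :
  Ymax j.+1 X w = Num.max (Ymax j X w) (X j w).
Proof.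
elim: j X => [|j IH] X; first by rewrite Ymax_recl !Ymax0 maxC.
by rewrite Ymax_recl IH Ymax_recl maxA.
Qed.

Variable X : nat -> T -> R.

Lemma Ymax_ge0 j w : 0 <= Ymax j X w.
Proof. by elim: j => [|j IH]; rewrite ?Ymax0 // Ymax_recr le_max IH. Qed.

Lemma le_Ymax w [i j] : (i < j)%N -> X i w <= Ymax j X w.
Proof.
elim: j => [//|j IH]; rewrite ltnS leq_eqVlt Ymax_recr le_max.
by case/orP => [/eqP ->|/IH ->]; rewrite ?lexx ?orbT.
Qed.

Lemma measurable_Ymax j : (forall i, measurable_fun setT (X i)) ->
  measurable_fun setT (Ymax j X).
Proof.
move=> mX; elim: j => [|j IH].
  by rewrite (_ : Ymax 0 X = cst 0) //; apply/funext => w; exact: Ymax0.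
rewrite (_ : Ymax j.+1 X = Ymax j X \max X j); first exact: measurable_maxr.
by apply/funext => w; exact: Ymax_recr.
Qed.

Lemma ecdf_ge0 k w t : 0 <= ecdf k X w t.
Proof. by rewrite mulr_ge0 ?invr_ge0 ?sumr_ge0. Qed.

Lemma ecdf_le1 k w t : ecdf k X w t <= 1.
Proof.
have count_le : \sum_(i < k) ((X i w <= t)%R%:R : R) <= k%:R.
  rewrite -[X in _ <= X%:R]card_ord -sumr_const.
  by apply: ler_sum => i _; case: (_ <= t).
case: k count_le => [|k] count_le; first by rewrite /ecdf big_ord0 mulr0.
by rewrite /ecdf ler_pdivrMl ?ltr0n // mulr1.
Qed.

End running_max.

Section expected_gain.
Context {R : realType} {d : measure_display} {T : measurableType d}.
Variables (P : probability T R) (X : nat -> T -> R) (k : nat).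
Hypotheses (mX : forall i, measurable_fun setT (X i))
  (indep : mutually_independent P k.+1 X)
  (ident : identically_distributed P k.+1 X).

Local Notation c := (k.+1%:R^-1 : R).

(* The event X_0, ..., X_(k-1) <= t < X_k, in the product form used by
   [mutually_independent]. *)
Definition crossing_side (t : R) (i : nat) : set R :=
  if (i < k)%N then `]-oo, t]%classic else `]t, +oo[%classic.

Definition crossing_event (t : R) : set T :=
  [set w | forall i, (i < k.+1)%N -> crossing_side t i (X i w)].

Lemma measurable_crossing_side t i : measurable (crossing_side t i).
Proof. by rewrite /crossing_side; case: ifP. Qed.

Lemma measurable_preimage i (B : set R) :
  measurable B -> measurable (X i @^-1` B).
Proof. by move=> mB; rewrite -[X i @^-1` B]setTI; exact: mX. Qed.

Lemma measurable_crossing_event t : measurable (crossing_event t).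
Proof.
rewrite (_ : crossing_event t =
    \bigcap_(i in [set i | (i < k.+1)%N]) (X i @^-1` crossing_side t i)) //.
apply: bigcap_measurableType => i _.
by apply: measurable_preimage; exact: measurable_crossing_side.
Qed.

Lemma crossing_event_le t : (P (crossing_event t) <= c%:E)%E.
Proof.
rewrite /crossing_event indep; last exact: measurable_crossing_side.
set p := P (X 0%N @^-1` `]-oo, t]%classic).
have mp : measurable (X 0%N @^-1` `]-oo, t]%classic) by apply/measurable_preimage.
rewrite big_ord_recr (eq_bigr (fun _ => p)) => [/=|i _]; last first.
  by rewrite /crossing_side /= ltn_ord ident // leqW.
rewrite /crossing_side ltnn ident // -setCitvl preimage_setC probability_setC // -/p.
have : (0 <= p <= 1)%E by rewrite measure_ge0 probability_le1.
case: p => [r /andP[]| |]; rewrite ?leey ?leNye ?andbF //.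
rewrite !lee_fin prodEFin prodr_const card_ord -EFinB -EFinM lee_fin => r0 r1.
by apply: exprn_mul_subr_le_inv; rewrite r0 r1.
Qed.

Lemma mem_crossing_event w t :
  Ymax k X w <= t -> t < X k w -> crossing_event t w.
Proof.
move=> Yt tX i; rewrite ltnS leq_eqVlt /crossing_side.
case/orP => [/eqP ->|ik]; first by rewrite ltnn /= in_itv /= tX.
by rewrite ik /= in_itv /= (le_trans (le_Ymax X w ik) Yt).
Qed.

Lemma gain_le_crossings (X_le1 : forall w, X k w <= 1) w :
  Ymax k.+1 X w - Ymax k X w <=
    c + \sum_(j < k.+1) c * \1_(crossing_event (j%:R / k.+1%:R)) w.
Proof.
rewrite Ymax_recr.
apply: le_trans (maxr_subr_le_grid _ _ _ (ltn0Sn k) (Ymax_ge0 X k w) (X_le1 w)) _.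
rewrite lerD2l ler_sum // => j _; rewrite ler_wpM2l ?invr_ge0 // indicE.
case: andP => [[Yt tX]|_]; last exact: ler0n.
by rewrite mem_set //; exact: mem_crossing_event.
Qed.

Lemma expectation_crossings_le :
  ('E_P[fun w => (c + \sum_(j < k.+1) c * \1_(crossing_event (j%:R / k.+1%:R)) w)%R]
    <= (2 * c)%:E)%E.
Proof.
set A := fun j : 'I_k.+1 => crossing_event (j%:R / k.+1%:R).
have c0 : 0 <= c by rewrite invr_ge0.
have mA j : measurable (A j) by exact: measurable_crossing_event.
have mcA j : measurable_fun setT (fun w => (c * \1_(A j) w)%:E).
  by apply/measurable_EFinP/measurable_funM => //; exact: measurable_indic.
have cA_ge0 j w : (0 <= (c * \1_(A j) w)%:E)%E by rewrite lee_fin mulr_ge0.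
rewrite unlock (_ : (fun w => _) =
    (fun w => c%:E + \sum_(j < k.+1) (c * \1_(A j) w)%:E)%E); last first.
  by apply/funext => w; rewrite EFinD sumEFin.
rewrite ge0_integralD //; last 2 first.
- by move=> w _; rewrite sume_ge0.
- exact: emeasurable_sum.
rewrite integral_cst // [X in (_ * X)%E](probability_setT P) mule1 ge0_integral_sum //.
have int_cA j : (\int[P]_w (c * \1_(A j) w)%:E = c%:E * P (A j))%E.
  under eq_integral do rewrite EFinM.
  rewrite ge0_integralZl_EFin // ?integral_indic ?setIT //.
  exact/measurable_EFinP/measurable_indic.
rewrite (eq_bigr _ (fun j _ => int_cA j)).
apply: (@le_trans _ _ (c%:E + \sum_(j < k.+1) (c * c)%:E)%E).
  apply/leeD2l/lee_sum => j _; rewrite EFinM lee_wpmul2l ?lee_fin //.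
  exact: crossing_event_le.
rewrite sumEFin sumr_const card_ord -EFinD lee_fin -mulrnAr -[c *+ k.+1]mulr_natr.
by rewrite mulVf ?pnatr_eq0 // mulr1 mulr_natl mulr2n.
Qed.

Lemma expectation_gain_le (X_le1 : forall w, X k w <= 1) :
  ('E_P[fun w => (Ymax k.+1 X w - Ymax k X w)%R] <= (2 * c)%:E)%E.
Proof.
have c0 : 0 <= c by rewrite invr_ge0.
apply: le_trans _ expectation_crossings_le; apply: expectation_le => [||w|w|].
- by apply: measurable_funB; exact: measurable_Ymax.
- apply: measurable_funD => //; apply: measurable_sum => j.
  apply: measurable_funM => //; apply: measurable_indic.
  exact: measurable_crossing_event.
- by rewrite subr_ge0 Ymax_recr le_max lexx.
- by rewrite addr_ge0 ?sumr_ge0 // => j _; rewrite mulr_ge0.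
- by apply: aeW => w; exact: gain_le_crossings.
Qed.

End expected_gain.

Theorem theorem2 (R : realType) (d : measure_display) (T : measurableType d)
    (P : probability T R) (X : nat -> T -> R) (k : nat) :
  (0 < k)%N ->
  (forall i, measurable_fun setT (X i)) ->
  mutually_independent P k.+1 X ->
  identically_distributed P k.+1 X ->
  (forall i w, 0 <= X i w <= 1) ->
  ((1 - (Num.sqrt (k%:R))^-1)%:E <=
   P [set w | ('E_P[fun v => (Ymax k.+1 X v - Ymax k X v)%R]
       <= \int[@lebesgue_measure R]_(t in `[0%R, 1%R]%classic)
            ((ecdf k X w t) ^+ k * (1 - ecdf k X w t))%:E
          + (6 * Num.sqrt (ln (k%:R) / k%:R))%:E)%E])%E.
Proof.
move=> k0 mX indep ident X01.
have [->|k2] : k = 1%N \/ (2 <= k)%N by case: (k) k0 => [|[|k']]; auto.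
  by rewrite sqrtr1 invr1 subrr measure_ge0.
rewrite (_ : [set w | _] = setT).
  by rewrite probability_setT lee_fin gerBl invr_ge0 sqrtr_ge0.
apply/seteqP; split => // w _ /=.
have X_le1 v : X k v <= 1 by case/andP: (X01 k v).
apply: le_trans (expectation_gain_le _ _ _ mX indep ident X_le1) _.
apply: lee_paddl.
  apply: integral_ge0 => t _; rewrite lee_fin mulr_ge0 ?exprn_ge0 ?ecdf_ge0 //.
  by rewrite subr_ge0 ecdf_le1.
by rewrite lee_fin; exact: two_div_le_sqrt_ln_div.
Qed.
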